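(* Let $E:[0,\infty)\times\mathbb{R}^2\to\mathbb{R}^2$ and $b:[0,\infty)\times\mathbb{R}^2\to\mathbb{R}$ be continuous with $b$ nowhere vanishing, $B=b\,e_3$. Fix $\Delta t>0$, $T>0$, $t^n=n\Delta t$, $N_T=\lfloor T/\Delta t\rfloor$. For each $\varepsilon>0$ let $(x^n_\varepsilon,v^n_\varepsilon)_{0\le n\le N_T}$ be generated (dropping the index $\varepsilon$ inside stages) by: given $(x^n,v^n)$, find $(x^{(1)},v^{(1)})$ and $(x^{(2)},v^{(2)})$ with $$x^{(1)}=x^n+\frac{\Delta t}{2\varepsilon}v^{(1)},\qquad v^{(1)}=v^n+\frac{\Delta t}{2\varepsilon}\Big[\frac{v^{(1)}}{\varepsilon}\wedge B(t^n,x^n)+E(t^n,x^n)\Big],$$ $$x^{(2)}=x^n+\frac{\Delta t}{2\varepsilon}v^{(2)},\qquad v^{(2)}=v^n+\frac{\Delta t}{2\varepsilon}\Big[\frac{v^{(2)}}{\varepsilon}\wedge B(t^{n+1},2x^{(1)}-x^n)+E(t^{n+1},2x^{(1)}-x^n)\Big],$$ and set $x^{n+1}=x^{(1)}+x^{(2)}-x^n$, $v^{n+1}=v^{(1)}+v^{(2)}-v^n$. Assume that for every $1\le n\le N_T$ the family $(x^n_\varepsilon,\varepsilon v^n_\varepsilon)_{\varepsilon>0}$ is bounded uniformly in $\varepsilon$ and that $(x^0_\varepsilon,\varepsilon v^0_\varepsilon)\to(y^0,0)$ as $\varepsilon\to0$. Then for every $0\le n\le N_T$, $x^n_\varepsilon\to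 y^n$ as $\varepsilon\to0$, where $(y^n)$ starts from $y^0$ and satisfies $$y^{(1)}=y^n+\frac{\Delta t}{2}U(t^n,y^n),\qquad y^{(2)}=y^n+\frac{\Delta t}{2}U(t^{n+1},2y^{(1)}-y^n),\qquad y^{n+1}=y^{(1)}+y^{(2)}-y^n.$$
   Context: Vectors of $\mathbb{R}^2$ are identified with vectors $(w_1,w_2,0)$ of $\mathbb{R}^3$, $e_3=(0,0,1)$, and $\wedge$ is the cross product; thus for $w\in\mathbb{R}^2$ and $B=b\,e_3$, $w\wedge B=b\,(w_2,-w_1)\in\mathbb{R}^2$. The guiding-center drift is $U(t,x)=\dfrac{E(t,x)\wedge B(t,x)}{\|B(t,x)\|^2}$. *)

From Stdlib Require Import Reals Lra ZArith.
Open Scope R_scope.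

Definition R2 := (R * R)%type.
Definition vadd (u w : R2) : R2 := (fst u + fst w, snd u + snd w).
Definition vsub (u w : R2) : R2 := (fst u - fst w, snd u - snd w).
Definition vscal (c : R) (u : R2) : R2 := (c * fst u, c * snd u).
Definition vnorm (u : R2) : R := sqrt (fst u ^ 2 + snd u ^ 2).
Definition vdist (u w : R2) : R := vnorm (vsub u w).

(* w /\ (b e3) = b (w2, -w1) *)
Definition wedgeB (w : R2) (b : R) : R2 := (b * snd w, - (b * fst w)).

(* Guiding-center drift U = (E /\ B) / |B|^2, with B = b e3. *)
Definition drift (E : R -> R2 -> R2) (b : R -> R2 -> R) (t : R) (x : R2) : R2 :=
  vscal (/ (b t x ^ 2)) (wedgeB (E t x) (b t x)).

Definition cont_half_R2 (f : R -> R2 -> R2) : Prop :=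
  forall t x, 0 <= t -> forall eta, 0 < eta -> exists delta, 0 < delta /\
    forall s z, 0 <= s -> Rabs (s - t) < delta -> vdist z x < delta ->
      vdist (f s z) (f t x) < eta.
Definition cont_half_R (f : R -> R2 -> R) : Prop :=
  forall t x, 0 <= t -> forall eta, 0 < eta -> exists delta, 0 < delta /\
    forall s z, 0 <= s -> Rabs (s - t) < delta -> vdist z x < delta ->
      Rabs (f s z - f t x) < eta.

Definition lim_eps0 (f : R -> R2) (l : R2) : Prop :=
  forall eta, 0 < eta -> exists delta, 0 < delta /\
    forall eps, 0 < eps < delta -> vdist (f eps) l < eta.

(* N_T = floor (T / dt)  (Int_part is the floor in Stdlib) *)
Definition NT (T dt : R) : nat := Z.to_nat (Int_part (T / dt)).

Definition tgrid (dt : R) (n : nat) : R := INR n * dt.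

Definition scheme_step (E : R -> R2 -> R2) (b : R -> R2 -> R) (dt eps : R)
  (n : nat) (xn vn xn1 vn1 : R2) : Prop :=
  exists x1 v1 x2 v2 : R2,
    let c := dt / (2 * eps) in
    x1 = vadd xn (vscal c v1) /\
    v1 = vadd vn (vscal c (vadd (wedgeB (vscal (/ eps) v1) (b (tgrid dt n) xn))
                                 (E (tgrid dt n) xn))) /\
    x2 = vadd xn (vscal c v2) /\
    v2 = vadd vn (vscal c (vadd
            (wedgeB (vscal (/ eps) v2)
                    (b (tgrid dt (S n)) (vsub (vscal 2 x1) xn)))
            (E (tgrid dt (S n)) (vsub (vscal 2 x1) xn)))) /\
    xn1 = vsub (vadd x1 x2) xn /\
    vn1 = vsub (vadd v1 v2) vn.

Definition limit_step (E : R -> R2 -> R2) (b : R -> R2 -> R) (dt : R)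
  (n : nat) (yn yn1 : R2) : Prop :=
  let y1 := vadd yn (vscal (dt / 2) (drift E b (tgrid dt n) yn)) in
  let y2 := vadd yn (vscal (dt / 2)
              (drift E b (tgrid dt (S n)) (vsub (vscal 2 y1) yn))) in
  yn1 = vsub (vadd y1 y2) yn.

From Stdlib Require Import Reals Lra Lia.
Open Scope R_scope.

(* Each stage is a linear 2x2 system for the velocity, whose magnetic part is a
   rotation; it is solved in closed form.  After multiplying numerator and
   denominator by eps^4, the position increment (dt / (2 eps)) v is a rational
   function of eps, eps v^n, E and b with denominator eps^4 + (dt b / 2)^2, which
   stays away from 0 as eps -> 0, and whose value at eps = 0 is (dt / 2) U.  So
   x^n -> y^n and eps v^n -> 0 propagate along the scheme by continuity alone. *)

Definition lim_eps0_R (g : R -> R) (l : R) : Prop :=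
  limit1_in g (fun eps => 0 < eps) l 0.

Lemma lim_eps0_R_const a : lim_eps0_R (fun _ => a) a.
Proof. exact (limit_free (fun _ => a) _ 0 0). Qed.

Lemma lim_eps0_R_id : lim_eps0_R (fun eps => eps) 0.
Proof. apply lim_x. Qed.

Lemma lim_eps0_R_pow g l k : lim_eps0_R g l -> lim_eps0_R (fun eps => g eps ^ k) (l ^ k).
Proof.
  intros Hg; induction k as [|k IH]; simpl.
  - apply lim_eps0_R_const.
  - apply limit_mul; assumption.
Qed.

Lemma Rabs_fst_le_vdist u w : Rabs (fst u - fst w) <= vdist u w.
Proof.
  unfold vdist, vnorm, vsub; simpl. rewrite <- sqrt_Rsqr_abs.
  apply sqrt_le_1_alt. pose proof (pow2_ge_0 (snd u - snd w)). unfold Rsqr. lra.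
Qed.

Lemma Rabs_snd_le_vdist u w : Rabs (snd u - snd w) <= vdist u w.
Proof.
  unfold vdist, vnorm, vsub; simpl. rewrite <- sqrt_Rsqr_abs.
  apply sqrt_le_1_alt. pose proof (pow2_ge_0 (fst u - fst w)). unfold Rsqr. lra.
Qed.

Lemma vdist_le_Rabs u w : vdist u w <= Rabs (fst u - fst w) + Rabs (snd u - snd w).
Proof.
  unfold vdist, vnorm, vsub; simpl.
  set (a := fst u - fst w); set (c := snd u - snd w).
  pose proof (Rabs_pos a); pose proof (Rabs_pos c).
  rewrite <- (sqrt_Rsqr (Rabs a + Rabs c)) by lra.
  apply sqrt_le_1_alt.
  pose proof (Rsqr_abs a); pose proof (Rsqr_abs c). unfold Rsqr in *. nra.
Qed.

Lemma lim_eps0_componentwise f l :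
  lim_eps0 f l <->
  lim_eps0_R (fun eps => fst (f eps)) (fst l) /\ lim_eps0_R (fun eps => snd (f eps)) (snd l).
Proof.
  unfold lim_eps0, lim_eps0_R, limit1_in, limit_in; simpl; unfold Rdist.
  assert (Habs : forall d eps, 0 < eps -> Rabs (eps - 0) < d <-> eps < d).
  { intros d eps Heps. rewrite Rminus_0_r, Rabs_pos_eq by lra. tauto. }
  split.
  - intros H; split; intros eta Heta; destruct (H eta Heta) as [d [Hd Hf]];
      exists d; split; try exact Hd; intros eps [Heps Hed]; apply (Habs d eps Heps) in Hed.
    + eapply Rle_lt_trans; [apply Rabs_fst_le_vdist | apply Hf; lra].
    + eapply Rle_lt_trans; [apply Rabs_snd_le_vdist | apply Hf; lra].
  - intros [H1 H2] eta Heta.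
    destruct (H1 (eta / 2)) as [d1 [Hd1 Hf1]]; [lra|].
    destruct (H2 (eta / 2)) as [d2 [Hd2 Hf2]]; [lra|].
    exists (Rmin d1 d2). split; [apply Rmin_pos; lra|].
    intros eps [Heps Hed]. eapply Rle_lt_trans; [apply vdist_le_Rabs|].
    pose proof (Rmin_l d1 d2); pose proof (Rmin_r d1 d2).
    assert (H1d : Rabs (eps - 0) < d1) by (apply Habs; lra).
    assert (H2d : Rabs (eps - 0) < d2) by (apply Habs; lra).
    specialize (Hf1 eps (conj Heps H1d)); specialize (Hf2 eps (conj Heps H2d)).
    lra.
Qed.

Lemma lim_eps0_ext f g l :
  (forall eps, 0 < eps -> f eps = g eps) -> lim_eps0 g l -> lim_eps0 f l.
Proof.
  intros Hfg Hg eta Heta. destruct (Hg eta Heta) as [d [Hd Hgd]].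
  exists d; split; [exact Hd|]. intros eps Heps. rewrite Hfg by lra. auto.
Qed.

Lemma lim_eps0_add f g a c :
  lim_eps0 f a -> lim_eps0 g c -> lim_eps0 (fun eps => vadd (f eps) (g eps)) (vadd a c).
Proof.
  rewrite !lim_eps0_componentwise. intros [Hf1 Hf2] [Hg1 Hg2].
  split; apply limit_plus; assumption.
Qed.

Lemma lim_eps0_sub f g a c :
  lim_eps0 f a -> lim_eps0 g c -> lim_eps0 (fun eps => vsub (f eps) (g eps)) (vsub a c).
Proof.
  rewrite !lim_eps0_componentwise. intros [Hf1 Hf2] [Hg1 Hg2].
  split; apply limit_minus; assumption.
Qed.

Lemma lim_eps0_scal k f k0 a :
  lim_eps0_R k k0 -> lim_eps0 f a -> lim_eps0 (fun eps => vscal (k eps) (f eps)) (vscal k0 a).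
Proof.
  rewrite !lim_eps0_componentwise. intros Hk [Hf1 Hf2].
  split; apply limit_mul; assumption.
Qed.

Lemma lim_eps0_wedgeB f be a b0 :
  lim_eps0 f a -> lim_eps0_R be b0 ->
  lim_eps0 (fun eps => wedgeB (f eps) (be eps)) (wedgeB a b0).
Proof.
  rewrite !lim_eps0_componentwise. intros [Hf1 Hf2] Hbe.
  split; [|apply limit_Ropp]; apply limit_mul; assumption.
Qed.

Lemma cont_half_R2_lim_eps0 (F : R -> R2 -> R2) t z z0 :
  cont_half_R2 F -> 0 <= t -> lim_eps0 z z0 -> lim_eps0 (fun eps => F t (z eps)) (F t z0).
Proof.
  intros HF Ht Hz eta Heta. destruct (HF t z0 Ht eta Heta) as [d [Hd HFd]].
  destruct (Hz d Hd) as [d' [Hd' Hzd]]. exists d'; split; [exact Hd'|].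
  intros eps Heps. apply HFd; auto. rewrite Rminus_diag, Rabs_R0. exact Hd.
Qed.

Lemma cont_half_R_lim_eps0 (f : R -> R2 -> R) t z z0 :
  cont_half_R f -> 0 <= t -> lim_eps0 z z0 -> lim_eps0_R (fun eps => f t (z eps)) (f t z0).
Proof.
  intros Hf Ht Hz eta Heta. destruct (Hf t z0 Ht eta Heta) as [d [Hd Hfd]].
  destruct (Hz d Hd) as [d' [Hd' Hzd]]. exists d'; split; [exact Hd'|].
  intros eps [Heps Hed]. simpl in *. unfold Rdist in *.
  rewrite Rminus_0_r, Rabs_pos_eq in Hed by lra.
  apply Hfd; auto. rewrite Rminus_diag, Rabs_R0. exact Hd.
Qed.

(* (dt / (2 eps)) v for the solution v of a stage with old velocity v^n, field
   value F and magnetic field be, written in terms of w = eps v^n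
   (see stage_solution). *)
Definition stage_incr (dt eps be : R) (w F : R2) : R2 :=
  let r := vadd w (vscal (dt / 2) F) in
  vscal (/ (eps ^ 4 + (dt / 2 * be) ^ 2))
    (vadd (vscal (dt / 2 * eps ^ 2) r) (vscal ((dt / 2) ^ 2) (wedgeB r be))).

Lemma wedgeB_resolvent k v s :
  v = vadd s (vscal k (wedgeB v 1)) ->
  vscal (1 + k ^ 2) v = vadd s (vscal k (wedgeB s 1)).
Proof.
  intros Hv.
  assert (Hs : s = vsub v (vscal k (wedgeB v 1))).
  { rewrite Hv at 1. destruct v, s; unfold vsub, vadd, vscal, wedgeB; simpl; f_equal; ring. }
  subst s. destruct v; unfold vsub, vadd, vscal, wedgeB; simpl; f_equal; ring.
Qed.

Lemma stage_solution dt eps be q F v :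
  0 < eps ->
  v = vadd q (vscal (dt / (2 * eps)) (vadd (wedgeB (vscal (/ eps) v) be) F)) ->
  vscal (dt / (2 * eps)) v = stage_incr dt eps be (vscal eps q) F.
Proof.
  intros Heps Hv.
  set (c := dt / (2 * eps)) in Hv |- *.
  assert (Hrot : v = vadd (vadd q (vscal c F)) (vscal (c * be / eps) (wedgeB v 1))).
  { rewrite Hv at 1. destruct v, q, F; unfold vadd, vscal, wedgeB; simpl; f_equal; field; lra. }
  pose proof (wedgeB_resolvent _ _ _ Hrot) as Hres.
  set (k := c * be / eps) in Hres.
  assert (Hk : 0 < 1 + k ^ 2) by (pose proof (pow2_ge_0 k); lra).
  assert (HD : 0 < eps ^ 4 + (dt / 2 * be) ^ 2)
    by (pose proof (pow_lt eps 4 Heps); pose proof (pow2_ge_0 (dt / 2 * be)); lra).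
  destruct v as [v1 v2], q as [q1 q2], F as [F1 F2].
  pose proof (f_equal fst Hres) as Hres1; pose proof (f_equal snd Hres) as Hres2.
  unfold vadd, vscal, wedgeB in Hres1, Hres2; cbn [fst snd] in Hres1, Hres2.
  unfold stage_incr, vadd, vscal, wedgeB; cbn [fst snd].
  f_equal; apply (Rmult_eq_reg_l (1 + k ^ 2)); try lra.
  - transitivity (c * ((1 + k ^ 2) * v1)); [ring|]. rewrite Hres1.
    unfold k, c. field. lra.
  - transitivity (c * ((1 + k ^ 2) * v2)); [ring|]. rewrite Hres2.
    unfold k, c. field. lra.
Qed.

Lemma stage_incr_lim_eps0 dt be w F b0 w0 F0 :
  b0 <> 0 -> dt <> 0 -> lim_eps0_R be b0 -> lim_eps0 w w0 -> lim_eps0 F F0 ->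
  lim_eps0 (fun eps => stage_incr dt eps (be eps) (w eps) (F eps)) (stage_incr dt 0 b0 w0 F0).
Proof.
  intros Hb0 Hdt Hbe Hw HF. unfold stage_incr.
  assert (Hr : lim_eps0 (fun eps => vadd (w eps) (vscal (dt / 2) (F eps)))
                        (vadd w0 (vscal (dt / 2) F0)))
    by (apply lim_eps0_add; [|apply lim_eps0_scal; [apply lim_eps0_R_const|]]; assumption).
  apply lim_eps0_scal; [apply limit_inv|apply lim_eps0_add; apply lim_eps0_scal].
  - apply limit_plus; [apply lim_eps0_R_pow, lim_eps0_R_id|].
    apply lim_eps0_R_pow, limit_mul; [apply lim_eps0_R_const | exact Hbe].
  - rewrite pow_ne_zero, Rplus_0_l by discriminate.
    apply pow_nonzero, Rmult_integral_contrapositive; split; lra.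
  - apply limit_mul; [apply lim_eps0_R_const | apply lim_eps0_R_pow, lim_eps0_R_id].
  - exact Hr.
  - apply lim_eps0_R_const.
  - apply lim_eps0_wedgeB; assumption.
Qed.

Lemma stage_incr_0 dt b0 F0 :
  b0 <> 0 -> dt <> 0 ->
  stage_incr dt 0 b0 (0, 0) F0 = vscal (dt / 2) (vscal (/ b0 ^ 2) (wedgeB F0 b0)).
Proof.
  intros Hb0 Hdt. destruct F0.
  unfold stage_incr, vadd, vscal, wedgeB; cbn [fst snd]. f_equal; field; auto.
Qed.

Lemma scheme_step_explicit E b dt eps n xn vn xn1 vn1 :
  0 < dt -> 0 < eps -> scheme_step E b dt eps n xn vn xn1 vn1 ->
  let i1 := stage_incr dt eps (b (tgrid dt n) xn) (vscal eps vn) (E (tgrid dt n) xn) in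
  let z := vadd xn (vscal 2 i1) in
  let i2 := stage_incr dt eps (b (tgrid dt (S n)) z) (vscal eps vn) (E (tgrid dt (S n)) z) in
  xn1 = vadd xn (vadd i1 i2) /\
  vscal eps vn1 = vsub (vscal (2 * eps ^ 2 / dt) (vadd i1 i2)) (vscal eps vn).
Proof.
  intros Hdt Heps [x1 [v1 [x2 [v2 H]]]]. cbv zeta in H.
  destruct H as (Hx1 & Hv1 & Hx2 & Hv2 & Hxn1 & Hvn1).
  apply stage_solution in Hv1; [|exact Heps].
  assert (Hz : vsub (vscal 2 x1) xn = vadd xn (vscal 2 (vscal (dt / (2 * eps)) v1))).
  { rewrite Hx1. unfold vsub, vadd, vscal; cbn [fst snd]; f_equal; ring. }
  rewrite Hz, Hv1 in Hv2. apply stage_solution in Hv2; [|exact Heps].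
  rewrite Hv1 in Hx1. rewrite Hv2 in Hx2.
  intros i1 z i2. fold i1 in Hx1, Hv1. fold i1 z i2 in Hx2, Hv2. split.
  - subst xn1 x1 x2. unfold vsub, vadd; cbn [fst snd]; f_equal; ring.
  - subst vn1. rewrite <- Hv1, <- Hv2.
    unfold vsub, vadd, vscal; cbn [fst snd]; f_equal; field; lra.
Qed.

Section OneStep.

Variables (E : R -> R2 -> R2) (b : R -> R2 -> R).
Hypotheses (HE : cont_half_R2 E) (Hb : cont_half_R b)
  (Hbnz : forall t x, 0 <= t -> b t x <> 0).
Variable dt : R.
Hypothesis Hdt : 0 < dt.

Lemma stage_incr_lim_drift t w z z0 :
  0 <= t -> lim_eps0 w (0, 0) -> lim_eps0 z z0 ->
  lim_eps0 (fun eps => stage_incr dt eps (b t (z eps)) (w eps) (E t (z eps)))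
           (vscal (dt / 2) (drift E b t z0)).
Proof.
  intros Ht Hw Hz. unfold drift.
  rewrite <- stage_incr_0 by (auto || lra).
  apply stage_incr_lim_eps0; auto; try lra.
  - exact (cont_half_R_lim_eps0 b t z z0 Hb Ht Hz).
  - exact (cont_half_R2_lim_eps0 E t z z0 HE Ht Hz).
Qed.

Lemma scheme_step_lim_eps0 n x v x' v' yn yn' :
  (forall eps, 0 < eps -> scheme_step E b dt eps n (x eps) (v eps) (x' eps) (v' eps)) ->
  limit_step E b dt n yn yn' ->
  lim_eps0 x yn -> lim_eps0 (fun eps => vscal eps (v eps)) (0, 0) ->
  lim_eps0 x' yn' /\ lim_eps0 (fun eps => vscal eps (v' eps)) (0, 0).
Proof.
  intros Hsch Hstep Hx Hv.
  assert (Ht : forall k, 0 <= tgrid dt k)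
    by (intros k; unfold tgrid; pose proof (pos_INR k); nra).
  pose (i1 := fun eps => stage_incr dt eps (b (tgrid dt n) (x eps)) (vscal eps (v eps))
                                    (E (tgrid dt n) (x eps))).
  pose (z := fun eps => vadd (x eps) (vscal 2 (i1 eps))).
  pose (i2 := fun eps => stage_incr dt eps (b (tgrid dt (S n)) (z eps)) (vscal eps (v eps))
                                    (E (tgrid dt (S n)) (z eps))).
  set (a1 := vscal (dt / 2) (drift E b (tgrid dt n) yn)).
  set (z0 := vadd yn (vscal 2 a1)).
  set (a2 := vscal (dt / 2) (drift E b (tgrid dt (S n)) z0)).
  assert (Hi1 : lim_eps0 i1 a1) by exact (stage_incr_lim_drift _ _ _ _ (Ht n) Hv Hx).
  assert (Hz : lim_eps0 z z0)
    by (apply lim_eps0_add; [|apply lim_eps0_scal; [apply lim_eps0_R_const|]]; assumption).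
  assert (Hi2 : lim_eps0 i2 a2) by exact (stage_incr_lim_drift _ _ _ _ (Ht (S n)) Hv Hz).
  assert (Hi : lim_eps0 (fun eps => vadd (i1 eps) (i2 eps)) (vadd a1 a2))
    by (apply lim_eps0_add; assumption).
  split.
  - apply (lim_eps0_ext _ (fun eps => vadd (x eps) (vadd (i1 eps) (i2 eps)))).
    { intros eps Heps. exact (proj1 (scheme_step_explicit _ _ _ _ _ _ _ _ _ Hdt Heps (Hsch eps Heps))). }
    replace yn' with (vadd yn (vadd a1 a2)); [apply lim_eps0_add; assumption|].
    unfold limit_step in Hstep; cbv zeta in Hstep. fold a1 in Hstep.
    replace (vsub (vscal 2 (vadd yn a1)) yn) with z0 in Hstep
      by (unfold z0, vsub, vadd, vscal; cbn [fst snd]; f_equal; ring).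
    subst yn'. fold a2. unfold vsub, vadd; cbn [fst snd]; f_equal; ring.
  - apply (lim_eps0_ext _ (fun eps => vsub (vscal (2 * eps ^ 2 / dt) (vadd (i1 eps) (i2 eps)))
                                        (vscal eps (v eps)))).
    { intros eps Heps. exact (proj2 (scheme_step_explicit _ _ _ _ _ _ _ _ _ Hdt Heps (Hsch eps Heps))). }
    replace (0, 0) with (vsub (vscal (2 * 0 ^ 2 / dt) (vadd a1 a2)) (0, 0))
      by (unfold vsub, vscal; cbn [fst snd]; f_equal; field; lra).
    apply lim_eps0_sub; [apply lim_eps0_scal|]; try assumption.
    apply limit_mul; [apply limit_mul; [apply lim_eps0_R_const|] | apply lim_eps0_R_const].
    apply lim_eps0_R_pow, lim_eps0_R_id.
Qed.

End OneStep.

Theorem proposition3p2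
  (E : R -> R2 -> R2) (b : R -> R2 -> R)
  (HE : cont_half_R2 E) (Hb : cont_half_R b)
  (Hbnz : forall t x, 0 <= t -> b t x <> 0)
  (dt T : R) (Hdt : 0 < dt) (HT : 0 < T)
  (X V : R -> nat -> R2)
  (Hscheme : forall eps, 0 < eps -> forall n, (n < NT T dt)%nat ->
      scheme_step E b dt eps n (X eps n) (V eps n) (X eps (S n)) (V eps (S n)))
  (Hbound : forall n, (1 <= n <= NT T dt)%nat -> exists M, forall eps, 0 < eps ->
      vnorm (X eps n) <= M /\ vnorm (vscal eps (V eps n)) <= M)
  (y : nat -> R2)
  (Hx0 : lim_eps0 (fun eps => X eps 0%nat) (y 0%nat))
  (Hv0 : lim_eps0 (fun eps => vscal eps (V eps 0%nat)) (0, 0))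
  (Hy : forall n, (n < NT T dt)%nat -> limit_step E b dt n (y n) (y (S n))) :
  forall n, (n <= NT T dt)%nat -> lim_eps0 (fun eps => X eps n) (y n).
Proof.
  enough (Hinv : forall n, (n <= NT T dt)%nat ->
            lim_eps0 (fun eps => X eps n) (y n) /\
            lim_eps0 (fun eps => vscal eps (V eps n)) (0, 0))
    by (intros n Hn; exact (proj1 (Hinv n Hn))).
  induction n as [|n IH]; intros Hn; [split; assumption|].
  destruct (IH ltac:(lia)) as [Hxn Hvn].
  apply (scheme_step_lim_eps0 E b HE Hb Hbnz dt Hdt n
           (fun eps => X eps n) (fun eps => V eps n) _ _ (y n)); try assumption.
  - intros eps Heps. apply Hscheme; [exact Heps | lia].
  - apply Hy; lia.
Qed.
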